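(* In a pre-Hilbert $*$-category, a morphism $a\colon A\to A$ satisfies $a\succ 0$ if and only if $a=x^*x$ for some object $X$ and some isomorphism $x\colon A\to X$.
   Context: A $*$-category is a category with a choice of $f^*\colon Y\to X$ for each $f\colon X\to Y$ such that $1^*=1$, $(gf)^*=f^*g^*$, $(f^* )^*=f$. A pre-Hilbert $*$-category is a $*$-category with (R1) a zero object, (R2) orthonormal biproducts of all pairs of objects (biproducts $(X,s_1,r_1,s_2,r_2)$ with $r_k=s_k^*$), (R3) an isometric kernel (kernel $m$ with $m^*m=1$) for every morphism, and (R4) every diagonal $\Delta\colon X\to X\oplus X$ a kernel of some morphism; such a category is additive. For a Hermitian endomorphism $a$ ($a^*=a$) of $A$, $a\geq 0$ means $a=y^*y$ for some object $Y$ and $y\colon A\to Y$, and $a\succ 0$ means $a\geq 0$ and $a$ is invertible. *)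

Set Implicit Arguments.
Unset Strict Implicit.

(* A *-category. [comp g f] is g ∘ f. Hom-sets are types, equality is Leibniz. *)
Record StarCat := {
  ob :> Type;
  hom : ob -> ob -> Type;
  idm : forall X : ob, hom X X;
  comp : forall X Y Z : ob, hom Y Z -> hom X Y -> hom X Z;
  star : forall X Y : ob, hom X Y -> hom Y X;
  comp_assoc : forall (W X Y Z : ob) (h : hom Y Z) (g : hom X Y) (f : hom W X),
      comp h (comp g f) = comp (comp h g) f;
  comp_id_l : forall (X Y : ob) (f : hom X Y), comp (idm Y) f = f;
  comp_id_r : forall (X Y : ob) (f : hom X Y), comp f (idm X) = f;
  star_id : forall X : ob, star (idm X) = idm X;
  star_comp : forall (X Y Z : ob) (g : hom Y Z) (f : hom X Y),
      star (comp g f) = comp (star f) (star g);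
  star_star : forall (X Y : ob) (f : hom X Y), star (star f) = f
}.

Arguments hom {s} _ _.
Arguments idm {s} _.
Arguments comp {s X Y Z} _ _.
Arguments star {s X Y} _.

Section Defs.
Variable C : StarCat.

Definition is_zero_object (Z : C) : Prop :=
  forall X : C, (exists! f : hom X Z, True) /\ (exists! f : hom Z X, True).

Definition is_zero_mor {X Y : C} (f : hom X Y) : Prop :=
  exists (Z : C) (g : hom X Z) (h : hom Z Y), is_zero_object Z /\ f = comp h g.

Definition is_biproduct (X Y P : C) (s1 : hom X P) (r1 : hom P X)
    (s2 : hom Y P) (r2 : hom P Y) : Prop :=
  comp r1 s1 = idm X /\ comp r2 s2 = idm Y /\
  is_zero_mor (comp r2 s1) /\ is_zero_mor (comp r1 s2) /\
  (forall (W : C) (f : hom W X) (g : hom W Y),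
      exists! h : hom W P, comp r1 h = f /\ comp r2 h = g) /\
  (forall (W : C) (f : hom X W) (g : hom Y W),
      exists! h : hom P W, comp h s1 = f /\ comp h s2 = g).

Definition is_orthonormal_biproduct (X Y P : C) (s1 : hom X P) (r1 : hom P X)
    (s2 : hom Y P) (r2 : hom P Y) : Prop :=
  is_biproduct s1 r1 s2 r2 /\ r1 = star s1 /\ r2 = star s2.

Definition is_kernel {K X Y : C} (f : hom X Y) (m : hom K X) : Prop :=
  is_zero_mor (comp f m) /\
  forall (W : C) (g : hom W X), is_zero_mor (comp f g) ->
    exists! h : hom W K, comp m h = g.

Definition is_isometry {X Y : C} (m : hom X Y) : Prop := comp (star m) m = idm X.

Definition is_iso {X Y : C} (x : hom X Y) : Prop :=
  exists y : hom Y X, comp y x = idm X /\ comp x y = idm Y.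

Definition hermitian {A : C} (a : hom A A) : Prop := star a = a.

Definition pos {A : C} (a : hom A A) : Prop :=
  hermitian a /\ exists (Y : C) (y : hom A Y), a = comp (star y) y.

Definition strictly_pos {A : C} (a : hom A A) : Prop := pos a /\ is_iso a.

End Defs.

Record PreHilbertStarCat := {
  phcat :> StarCat;
  R1_zero : exists Z : phcat, is_zero_object Z;
  R2_biproducts : forall X Y : phcat, exists (P : phcat) (s1 : hom X P) (r1 : hom P X)
      (s2 : hom Y P) (r2 : hom P Y), is_orthonormal_biproduct s1 r1 s2 r2;
  R3_kernels : forall (X Y : phcat) (f : hom X Y),
      exists (K : phcat) (m : hom K X), is_kernel f m /\ is_isometry m;
  R4_diagonals : forall (X P : phcat) (s1 : hom X P) (r1 : hom P X)
      (s2 : hom X P) (r2 : hom P X),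
      is_orthonormal_biproduct s1 r1 s2 r2 ->
      forall d : hom X P, comp r1 d = idm X -> comp r2 d = idm X ->
      exists (Z : phcat) (g : hom P Z), is_kernel g d
}.

(* If a = y^* y is invertible with inverse b, then r := b y^* is a left
   inverse of y, so e := y r is an idempotent on Y.  The equalizer of 1 and e,
   built as the isometric kernel of (c ∘ <1, e>) where c has the diagonal as
   kernel, splits e: y = m x with m an isometry and x an isomorphism (with
   inverse r m).  Hence a = x^* m^* m x = x^* x. *)

Set Implicit Arguments.
Unset Strict Implicit.

Section StarCategory.
Variable C : StarCat.

Lemma zero_mor_comp_r (X Y W : C) (f : hom X Y) (h : hom W X) :
  is_zero_mor f -> is_zero_mor (comp f h).
Proof.
  intros [Z [g [k [HZ ->]]]]. exists Z, (comp g h), k. split; [exact HZ|].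
  now rewrite comp_assoc.
Qed.

Lemma isometry_cancel_l (X Y W : C) (m : hom X Y) (p q : hom W X) :
  is_isometry m -> comp m p = comp m q -> p = q.
Proof.
  intros Hm E. rewrite <- (comp_id_l p), <- (comp_id_l q), <- Hm.
  now rewrite <- !comp_assoc, E.
Qed.

Lemma star_comp_isometry (X Y Z : C) (m : hom Y Z) (x : hom X Y) :
  is_isometry m -> comp (star (comp m x)) (comp m x) = comp (star x) x.
Proof.
  intros Hm. rewrite star_comp, <- comp_assoc, (comp_assoc (star m)), Hm.
  now rewrite comp_id_l.
Qed.

Lemma biproduct_hom_ext (X Y P W : C) (s1 : hom X P) (r1 : hom P X)
    (s2 : hom Y P) (r2 : hom P Y) (p q : hom W P) :
  is_biproduct s1 r1 s2 r2 -> comp r1 p = comp r1 q -> comp r2 p = comp r2 q ->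
  p = q.
Proof.
  intros (_ & _ & _ & _ & Hprod & _) E1 E2.
  destruct (Hprod W (comp r1 q) (comp r2 q)) as [h [_ Huniq]].
  transitivity h; [symmetry|]; apply Huniq; auto.
Qed.

Lemma is_iso_comp (X Y Z : C) (g : hom Y Z) (f : hom X Y) :
  is_iso f -> is_iso g -> is_iso (comp g f).
Proof.
  intros [f' [Hf'f Hff']] [g' [Hg'g Hgg']]. exists (comp f' g'). split.
  - now rewrite <- comp_assoc, (comp_assoc g'), Hg'g, comp_id_l.
  - now rewrite <- comp_assoc, (comp_assoc f), Hff', comp_id_l.
Qed.

Lemma is_iso_star (X Y : C) (f : hom X Y) : is_iso f -> is_iso (star f).
Proof.
  intros [g [Hgf Hfg]]. exists (star g).
  split; now rewrite <- star_comp, ?Hfg, ?Hgf, star_id.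
Qed.

Lemma pos_star_comp (X Y : C) (x : hom X Y) : pos (comp (star x) x).
Proof.
  split.
  - unfold hermitian. now rewrite star_comp, star_star.
  - now exists Y, x.
Qed.

End StarCategory.

Section PreHilbertStarCategory.
Variable C : PreHilbertStarCat.

Lemma isometric_equalizer (X Y : C) (f g : hom X Y) :
  exists (K : C) (m : hom K X),
    is_isometry m /\ comp f m = comp g m /\
    forall (W : C) (h : hom W X), comp f h = comp g h ->
      exists k : hom W K, comp m k = h.
Proof.
  destruct (R2_biproducts Y Y) as (P & s1 & r1 & s2 & r2 & HOB).
  pose proof HOB as [HB _]. pose proof HB as (_ & _ & _ & _ & Hprod & _).
  destruct (Hprod X f g) as [u [[Hu1 Hu2] _]].
  destruct (Hprod Y (idm Y) (idm Y)) as [d [[Hd1 Hd2] _]].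
  destruct (R4_diagonals HOB Hd1 Hd2)
    as (Z & c & Hcd0 & Hcd).
  destruct (R3_kernels (comp c u)) as (K & m & (Hcum0 & Hcum) & Hm).
  exists K, m. split; [exact Hm|]. split.
  - rewrite <- comp_assoc in Hcum0.
    destruct (Hcd K (comp u m) Hcum0) as [k [Hdk _]].
    rewrite <- Hu1, <- Hu2, <- !comp_assoc, <- Hdk, !comp_assoc, Hd1, Hd2.
    reflexivity.
  - intros W h Hh.
    assert (Huh : comp u h = comp d (comp f h)).
    { apply (biproduct_hom_ext HB); rewrite !comp_assoc, ?Hu1, ?Hu2, ?Hd1, ?Hd2;
        now rewrite comp_id_l. }
    assert (Hzero : is_zero_mor (comp (comp c u) h)).
    { rewrite <- comp_assoc, Huh, comp_assoc. now apply zero_mor_comp_r. }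
    destruct (Hcum W h Hzero) as [k [Hmk _]]. now exists k.
Qed.

Lemma left_invertible_isometry_iso_factor (A Y : C) (y : hom A Y) (r : hom Y A) :
  comp r y = idm A ->
  exists (K : C) (m : hom K Y) (x : hom A K),
    is_isometry m /\ is_iso x /\ y = comp m x.
Proof.
  intros Hry.
  destruct (isometric_equalizer (idm Y) (comp y r)) as (K & m & Hm & Hem & Hfact).
  destruct (Hfact A y) as [x Hmx].
  { now rewrite comp_id_l, <- comp_assoc, Hry, comp_id_r. }
  exists K, m, x. split; [exact Hm|]. split; [|now symmetry].
  exists (comp r m). split.
  - now rewrite <- comp_assoc, Hmx.
  - apply (isometry_cancel_l Hm).
    now rewrite !comp_assoc, Hmx, <- Hem, comp_id_l, comp_id_r.
Qed.

End PreHilbertStarCategory.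

Theorem proposition6p3 (C : PreHilbertStarCat) (A : C) (a : hom A A) :
  strictly_pos a <-> exists (X : C) (x : hom A X), is_iso x /\ a = comp (star x) x.
Proof.
  split.
  - intros [[_ [Y [y Ha]]] [b [Hba _]]].
    assert (Hry : comp (comp b (star y)) y = idm A).
    { now rewrite <- comp_assoc, <- Ha. }
    destruct (left_invertible_isometry_iso_factor Hry) as (K & m & x & Hm & Hx & ->).
    exists K, x. split; [exact Hx|].
    now rewrite Ha, star_comp_isometry.
  - intros [X [x [Hx ->]]]. split; [apply pos_star_comp|].
    apply is_iso_comp; [exact Hx | now apply is_iso_star].
Qed.
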